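(* Fix $n,m,\mu\in\mathbb{N}$ and $\delta\in\mathbb{R}$, and fix angles $\theta_1,\dots,\theta_n$ and $\phi_1,\dots,\phi_m$ satisfying $|\theta_i|,|\phi_j|<\pi/2$ if $\mu=1$ and $|\theta_i|,|\phi_j|<\pi/(2(\mu-1))$ if $\mu>1$. Let $S$ be the set of triples $(x,v,\zeta)\in[0,+\infty)^{n+m}\times[0,+\infty)^n\times(0,+\infty)^m$ with $x_1\geq x_2\geq\cdots\geq x_{n+m}$ such that $$x\succ_w (v_1,\dots,v_n,\zeta_1^\mu,\dots,\zeta_m^\mu)$$ and $$\sum_{i=1}^n x_i^{k/\mu}+\sum_{i=1}^n v_i^{k/\mu}\cos(\theta_i k)\;\geq\;\sum_{i=1}^m \zeta_i^{k}\cos(\phi_i k)\quad\text{for all }k\in\{1,\dots,\mu-1\}.$$ Then $S$ is a convex set.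
   Context: For $y\in\mathbb{R}^{N}$, $y^{\downarrow}$ is the vector of its components sorted in descending order; $x\succ_w y$ (weak majorization) means $\sum_{i=1}^k x^{\downarrow}_i\geq\sum_{i=1}^k y^{\downarrow}_i$ for all $k=1,\dots,N$. Interpretation: for a transfer function with poles $p\in\mathbb{C}^n$ ($p_1,\dots,p_{n_r}$ real, the rest non-real) and zeros $z\in\mathbb{C}^m$, with $\theta_i=\angle(p_i+\delta)$, $\phi_j=\angle(z_j+\delta)$, $w_i=(p_i+\delta)^\mu$ for $i\le n_r$ and $w_i=0$ otherwise, $v_i=0$ for $i\le n_r$, $v_i=|p_i+\delta|^\mu$ for $n_r<i\le n$, and $\zeta_j=|z_j+\delta|$, the variables are $x=w^{\downarrow}$, $(v_1,\dots,v_n)$ and $\zeta$, and the two displayed conditions are the sufficient conditions for logarithmic complete monotonicity expressed in these variables. *)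

From HB Require Import structures.
From mathcomp Require Import all_boot all_order all_algebra.
From mathcomp Require Import all_classical all_reals all_analysis.
Set Implicit Arguments. Unset Strict Implicit. Unset Printing Implicit Defensive.
Import Order.TTheory GRing.Theory Num.Theory.
Local Open Scope ring_scope.

Section Defs.
Variable R : realType.

Definition rowseq N (x : 'rV[R]_N) : seq R := [seq x 0 i | i <- enum 'I_N].

Definition sort_desc (s : seq R) : seq R := sort (fun a b => b <= a) s.

Definition wmaj N (x y : 'rV[R]_N) : Prop :=
  forall k : nat, (1 <= k <= N)%N ->
    \sum_(i < k) (sort_desc (rowseq y))`_i <= \sum_(i < k) (sort_desc (rowseq x))`_i.

Definition in_S (n m mu : nat) (theta : 'I_n -> R) (phi : 'I_m -> R)
  (x : 'rV[R]_(n + m)) (v : 'rV[R]_n) (z : 'rV[R]_m) : Prop :=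
  (forall i, 0 <= x 0 i) /\
  (forall i, 0 <= v 0 i) /\
  (forall j, 0 < z 0 j) /\
  (forall i j : 'I_(n + m), (i <= j)%N -> x 0 j <= x 0 i) /\
  wmaj x (row_mx v (map_mx (fun a => a ^+ mu) z)) /\
  (forall k : nat, (1 <= k <= mu - 1)%N ->
        \sum_(i < n) powR (x 0 (lshift m i)) (k%:R / mu%:R)
        + \sum_(i < n) powR (v 0 i) (k%:R / mu%:R) * cos (theta i * k%:R)
        >= \sum_(j < m) (z 0 j) ^+ k * cos (phi j * k%:R)).

End Defs.

(* Signs and the
   ordering of x are linear conditions.  The sum of the k largest entries of a
   vector is convex and monotone in the vector, and linear on nonincreasing
   vectors; as (v, z^mu) depends entrywise convexly on (v, z), weak
   majorization is preserved.  In the moment conditions z^k is convex, x^(k/mu)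
   is concave because k < mu, and the bounds on the angles make every
   cos (k theta_i), cos (k phi_j) nonnegative. *)
From HB Require Import structures.
From mathcomp Require Import all_boot all_order all_algebra all_fingroup.
From mathcomp Require Import all_classical all_reals all_analysis zify.
Import Order.TTheory GRing.Theory Num.Theory.
Set Implicit Arguments.
Unset Strict Implicit.
Unset Printing Implicit Defensive.
Local Open Scope ring_scope.

Section ConvexCombination.
Variables (R : realType) (t : R).
Hypothesis t01 : 0 <= t <= 1.

Let t_ge0 : 0 <= t. Proof. by case/andP: t01. Qed.
Let onemt_ge0 : 0 <= 1 - t. Proof. by case/andP: t01; rewrite subr_ge0. Qed.

Lemma conv_ge0 (a b : R) : 0 <= a -> 0 <= b -> 0 <= t * a + (1 - t) * b.
Proof. by move=> a0 b0; rewrite addr_ge0 // mulr_ge0. Qed.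

Lemma conv_gt0 (a b : R) : 0 < a -> 0 < b -> 0 < t * a + (1 - t) * b.
Proof.
case/andP: t01 => t0 t1 a0 b0.
by have := @convR_gt0 R a b (Itv01 t0 t1) a0 b0; rewrite convRE.
Qed.

Lemma powR_conv_le (p a b : R) : 1 <= p -> 0 <= a -> 0 <= b ->
  powR (t * a + (1 - t) * b) p <= t * powR a p + (1 - t) * powR b p.
Proof.
case/andP: t01 => t0 t1 p1 a0 b0.
have := @convex_powR R p p1 (Itv01 t0 t1) a b.
by rewrite !inE /= !in_itv /= !andbT !convRE; apply.
Qed.

Lemma exprn_conv_le (k : nat) (a b : R) : 0 <= a -> 0 <= b ->
  (t * a + (1 - t) * b) ^+ k <= t * a ^+ k + (1 - t) * b ^+ k.
Proof.
move=> a0 b0; case: k => [|k]; first by rewrite !expr0 !mulr1 addrC subrK.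
by rewrite -!powR_mulrn ?conv_ge0 //; apply: powR_conv_le; rewrite ?ler1n.
Qed.

(* Concavity for [p <= 1] is convexity for [1/p], applied to [a^p] and [b^p]. *)
Lemma powR_conv_ge (p a b : R) : 0 < p <= 1 -> 0 <= a -> 0 <= b ->
  t * powR a p + (1 - t) * powR b p <= powR (t * a + (1 - t) * b) p.
Proof.
case/andP=> p0 p1 a0 b0.
have p_neq0 : p != 0 by rewrite gt_eqF.
have := @powR_conv_le p^-1 (powR a p) (powR b p).
rewrite invf_ge1 // -!powRrM !mulfV // !powRr1 // => /(_ p1 (powR_ge0 _ _) (powR_ge0 _ _)).
move=> /(@ge0_ler_powR R p (ltW p0)); rewrite -powRrM mulVf // powRr1; last first.
  by rewrite conv_ge0 // powR_ge0.
by apply; rewrite nnegrE ?conv_ge0 // powR_ge0.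
Qed.

End ConvexCombination.

Lemma cos_mulrn_ge0 (R : realType) (a M : R) (k : nat) : k%:R <= M -> `|a| < pi / (2 * M) ->
  0 <= cos (a * k%:R).
Proof.
move=> kM ha; have M_gt0 : 0 < M.
  have := le_lt_trans (normr_ge0 a) ha.
  by rewrite pmulr_rgt0 ?pi_gt0 // invr_gt0 pmulr_rgt0.
apply: cos_ge0_pihalf; rewrite -ler_norml normrM normr_nat.
rewrite (le_trans (ler_wpM2l (normr_ge0 _) kM)) // -ler_pdivlMr //.
by rewrite -mulrA -invfM ltW.
Qed.

Section TopSums.
Variables (R : realType) (N : nat).
Implicit Types (w u : 'I_N -> R) (G : {set 'I_N}) (k : nat).

Definition nonincreasing w := forall i j : 'I_N, (i <= j)%N -> w j <= w i.

Definition top_sum k w : R :=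
  \sum_(i < k) (sort_desc [seq w i | i <- enum 'I_N])`_i.

Lemma nonincreasing_conv (t : R) w u : 0 <= t <= 1 ->
  nonincreasing w -> nonincreasing u -> nonincreasing (fun i => t * w i + (1 - t) * u i).
Proof.
case/andP=> t0 t1 hw hu i j ij.
by rewrite lerD // ler_wpM2l ?subr_ge0 // ?hw ?hu.
Qed.

Lemma card_ord_prefix k : (k <= N)%N -> #|[set i : 'I_N | (i < k)%N]| = k.
Proof.
move=> kN; rewrite -sum1_card (eq_bigl (fun i : 'I_N => (i < k)%N)); last by move=> i; rewrite inE.
by rewrite -(big_ord_widen _ (fun _ => 1%N) kN) sum1_card card_ord.
Qed.

Lemma card_le_ord G : (#|G| <= N)%N.
Proof. by rewrite -[X in (_ <= X)%N](card_ord N) max_card. Qed.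

(* The elements of [G] outside the prefix [i < k] are exchanged one by one
   against the equally many prefix elements missing from [G]; for [k < N] the
   value [u k] separates the two groups. *)
Lemma sum_le_prefix_sum u G k : nonincreasing u -> #|G| = k ->
  \sum_(i in G) u i <= \sum_(i : 'I_N | (i < k)%N) u i.
Proof.
move=> hu cG; set L := [set i : 'I_N | (i < k)%N].
have kN : (k <= N)%N by rewrite -cG card_le_ord.
rewrite [X in _ <= X](eq_bigl (fun i => i \in L)); last by move=> i; rewrite inE.
rewrite (big_setID L) [X in _ <= X](big_setID G) /= finset.setIC lerD2l.
have cD : #|G :\: L| = #|L :\: G| by rewrite !cardsD cG card_ord_prefix // finset.setIC.
have [Nk|kN'] := leqP N k.
  have GL0 : G :\: L = finset.set0.
    by apply/setP => i; rewrite !inE (leq_trans (ltn_ord i) Nk).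
  have LG0 : L :\: G = finset.set0 by apply/eqP; rewrite -cards_eq0 -cD GL0 cards0.
  by rewrite GL0 LG0.
pose c := u (Ordinal kN').
apply: (@le_trans _ _ (\sum_(i in G :\: L) c)).
  by apply: ler_sum => i; rewrite !inE -leqNgt => /andP[ki _]; apply: hu.
rewrite sumr_const cD -sumr_const; apply: ler_sum => i.
by rewrite !inE => /andP[_ ik]; apply: hu; rewrite ltnW.
Qed.

Lemma sort_desc_perm w : exists p : 'S_N,
  forall j : 'I_N, (sort_desc [seq w i | i <- enum 'I_N])`_j = w (p j).
Proof.
have : perm_eq (sort_desc [seq w i | i <- enum 'I_N]) [tuple w i | i < N].
  by rewrite /sort_desc perm_sort.
case/tuple_permP => p ->; exists p => j.
by rewrite (nth_map j) ?size_enum_ord // nth_ord_enum tnth_map tnth_ord_tuple.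
Qed.

Lemma sort_desc_nonincreasing w :
  nonincreasing (fun j => (sort_desc [seq w i | i <- enum 'I_N])`_j).
Proof.
move=> i j ij; set s := sort_desc _.
have size_s : size s = N by rewrite size_sort size_map size_enum_ord.
have s_sorted : sorted (fun a b : R => b <= a) s.
  by apply: sort_sorted => a b; exact: le_total.
apply: (sorted_leq_nth _ _ 0 s_sorted); rewrite ?inE ?size_s //.
by move=> b a c /= ba cb; exact: le_trans cb ba.
Qed.

Lemma top_sum_ge w G k : #|G| = k -> \sum_(i in G) w i <= top_sum k w.
Proof.
move=> cG; have kN : (k <= N)%N by rewrite -cG card_le_ord.
have [p hp] := sort_desc_perm w.
rewrite /top_sum (big_ord_widen _ (fun i => (sort_desc _)`_i) kN).
have cpG : #|p @^-1: G| = k by rewrite card_preimset ?cG //; exact: perm_inj.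
have -> : \sum_(i in G) w i = \sum_(j in p @^-1: G) (sort_desc [seq w i | i <- enum 'I_N])`_j.
  by rewrite (reindex_inj (@perm_inj _ p)); apply: eq_big => [j|j _]; rewrite ?inE ?hp.
exact: sum_le_prefix_sum (sort_desc_nonincreasing w) cpG.
Qed.

Lemma top_sum_attained w k : (k <= N)%N ->
  exists2 G : {set 'I_N}, #|G| = k & top_sum k w = \sum_(i in G) w i.
Proof.
move=> kN; have [p hp] := sort_desc_perm w.
exists ((p^-1)%g @^-1: [set j : 'I_N | (j < k)%N]).
  by rewrite card_preimset ?card_ord_prefix //; exact: perm_inj.
rewrite /top_sum (big_ord_widen _ (fun i => (sort_desc _)`_i) kN).
rewrite [RHS](reindex_inj (@perm_inj _ p)) /=.
by apply: eq_big => [j|j _]; rewrite ?inE ?permK ?hp.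
Qed.

Lemma top_sum_nonincreasing w k : (k <= N)%N -> nonincreasing w ->
  top_sum k w = \sum_(i : 'I_N | (i < k)%N) w i.
Proof.
move=> kN hw; apply/le_anti/andP; split.
  by have [G cG ->] := top_sum_attained w kN; exact: sum_le_prefix_sum.
rewrite (eq_bigl (fun i => i \in [set i : 'I_N | (i < k)%N])); last by move=> i; rewrite inE.
exact/top_sum_ge/card_ord_prefix.
Qed.

Lemma le_top_sum w u k : (k <= N)%N -> (forall i, w i <= u i) ->
  top_sum k w <= top_sum k u.
Proof.
move=> kN wu; have [G cG ->] := top_sum_attained w kN.
by apply: le_trans (top_sum_ge u cG); apply: ler_sum => i _.
Qed.

Lemma top_sum_conv_le (t : R) w u k : 0 <= t <= 1 -> (k <= N)%N ->
  top_sum k (fun i => t * w i + (1 - t) * u i) <= t * top_sum k w + (1 - t) * top_sum k u.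
Proof.
case/andP=> t0 t1 kN; have [G cG ->] := top_sum_attained (fun i => t * w i + (1 - t) * u i) kN.
rewrite big_split /= -!mulr_sumr lerD // ler_wpM2l ?subr_ge0 //; exact: top_sum_ge.
Qed.

End TopSums.

Section MomentInequality.
Variables (R : realType) (n m k : nat) (p : R) (ca : 'I_n -> R) (cz : 'I_m -> R).
Hypotheses (p01 : 0 < p <= 1) (ca_ge0 : forall i, 0 <= ca i) (cz_ge0 : forall j, 0 <= cz j).

Definition moment_ineq (a b : 'I_n -> R) (c : 'I_m -> R) : Prop :=
  \sum_(j < m) c j ^+ k * cz j <= \sum_(i < n) powR (a i) p + \sum_(i < n) powR (b i) p * ca i.

Lemma moment_ineq_conv (t : R) (a1 a2 b1 b2 : 'I_n -> R) (c1 c2 : 'I_m -> R) : 0 <= t <= 1 ->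
  (forall i, 0 <= a1 i) -> (forall i, 0 <= a2 i) ->
  (forall i, 0 <= b1 i) -> (forall i, 0 <= b2 i) ->
  (forall j, 0 <= c1 j) -> (forall j, 0 <= c2 j) ->
  moment_ineq a1 b1 c1 -> moment_ineq a2 b2 c2 ->
  moment_ineq (fun i => t * a1 i + (1 - t) * a2 i) (fun i => t * b1 i + (1 - t) * b2 i)
              (fun j => t * c1 j + (1 - t) * c2 j).
Proof.
move=> t01 a10 a20 b10 b20 c10 c20 h1 h2.
have [t0 s0] : 0 <= t /\ 0 <= 1 - t by case/andP: t01; rewrite subr_ge0.
apply: (le_trans (y := t * \sum_(j < m) c1 j ^+ k * cz j
                      + (1 - t) * \sum_(j < m) c2 j ^+ k * cz j)).
  rewrite !mulr_sumr -big_split /=; apply: ler_sum => j _.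
  by rewrite !mulrA -mulrDl ler_wpM2r // exprn_conv_le.
apply: le_trans (lerD (ler_wpM2l t0 h1) (ler_wpM2l s0 h2)) _.
rewrite !mulrDr !mulr_sumr addrACA -!big_split /=.
apply: ler_sum => i _; apply: lerD; first exact: powR_conv_ge.
by rewrite !mulrA -mulrDl ler_wpM2r // powR_conv_ge.
Qed.

End MomentInequality.

Lemma row_convE (R : realType) N (t : R) (a b : 'rV[R]_N) :
  (t *: a + (1 - t) *: b) 0 = (fun i => t * a 0 i + (1 - t) * b 0 i).
Proof. by apply/funext => i; rewrite !mxE. Qed.

Lemma wmajE (R : realType) N (x y : 'rV[R]_N) :
  wmaj x y = forall k, (1 <= k <= N)%N -> top_sum k (y 0) <= top_sum k (x 0).
Proof. by []. Qed.

Lemma wmaj_conv (R : realType) N (t : R) (x1 x2 y y1 y2 : 'rV[R]_N) : 0 <= t <= 1 ->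
  nonincreasing (x1 0) -> nonincreasing (x2 0) ->
  (forall i, y 0 i <= t * y1 0 i + (1 - t) * y2 0 i) ->
  wmaj x1 y1 -> wmaj x2 y2 -> wmaj (t *: x1 + (1 - t) *: x2) y.
Proof.
rewrite !wmajE => t01 hx1 hx2 hy w1 w2 k /andP[k1 kN].
have [t0 s0] : 0 <= t /\ 0 <= 1 - t by case/andP: t01; rewrite subr_ge0.
have hx : nonincreasing ((t *: x1 + (1 - t) *: x2) 0).
  by rewrite row_convE; exact: nonincreasing_conv.
have k1N : (1 <= k <= N)%N by rewrite k1.
apply: le_trans (le_top_sum kN hy) _; apply: le_trans (top_sum_conv_le (y1 0) (y2 0) t01 kN) _.
apply: le_trans (lerD (ler_wpM2l t0 (w1 k k1N)) (ler_wpM2l s0 (w2 k k1N))) _.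
rewrite !top_sum_nonincreasing // !mulr_sumr -big_split /=.
by apply: ler_sum => i _; rewrite !mxE.
Qed.

Theorem proposition9 (R : realType) (n m mu : nat) (delta : R)
  (theta : 'I_n -> R) (phi : 'I_m -> R)
  (Hth1 : mu = 1%N -> forall i, `|theta i| < pi / 2)
  (Hph1 : mu = 1%N -> forall j, `|phi j| < pi / 2)
  (Hth : (1 < mu)%N -> forall i, `|theta i| < pi / (2 * (mu%:R - 1)))
  (Hph : (1 < mu)%N -> forall j, `|phi j| < pi / (2 * (mu%:R - 1))) :
  forall (x1 x2 : 'rV[R]_(n + m)) (v1 v2 : 'rV[R]_n) (z1 z2 : 'rV[R]_m) (t : R),
    0 <= t <= 1 ->
    in_S mu theta phi x1 v1 z1 ->
    in_S mu theta phi x2 v2 z2 ->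
    in_S mu theta phi (t *: x1 + (1 - t) *: x2) (t *: v1 + (1 - t) *: v2)
                      (t *: z1 + (1 - t) *: z2).
Proof.
move=> x1 x2 v1 v2 z1 z2 t t01 [x1_ge0 [v1_ge0 [z1_gt0 [x1_dec [maj1 mom1]]]]]
  [x2_ge0 [v2_ge0 [z2_gt0 [x2_dec [maj2 mom2]]]]].
split; first by move=> i; rewrite row_convE conv_ge0.
split; first by move=> i; rewrite row_convE conv_ge0.
split; first by move=> j; rewrite row_convE conv_gt0.
split; first by rewrite row_convE; exact: nonincreasing_conv.
split.
  apply: (wmaj_conv t01 x1_dec x2_dec _ maj1 maj2) => i.
  rewrite -(fintype.splitK i); case: (fintype.split i) => j.
    by rewrite !row_mxEl row_convE.
  by rewrite !row_mxEr !mxE exprn_conv_le // ltW.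
move=> k /[dup] k_range /andP[k_ge1 k_le].
have [mu_gt1 k_lt_mu] : (1 < mu)%N /\ (k < mu)%N by lia.
have mu_gt0 : 0 < mu%:R :> R by rewrite ltr0n ltnW.
have p01 : 0 < (k%:R / mu%:R : R) <= 1.
  by rewrite divr_gt0 ?ltr0n ?(ltnW mu_gt1) //= ler_pdivrMr // mul1r ler_nat ltnW.
have cos_ge0 (a : R) : `|a| < pi / (2 * (mu%:R - 1)) -> 0 <= cos (a * k%:R).
  by apply: cos_mulrn_ge0; rewrite lerBrDr natr1 ler_nat.
rewrite !row_convE.
exact: (moment_ineq_conv p01 (fun i => cos_ge0 _ (Hth mu_gt1 i))
  (fun j => cos_ge0 _ (Hph mu_gt1 j)) t01 (fun i => x1_ge0 _) (fun i => x2_ge0 _)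
  v1_ge0 v2_ge0 (fun j => ltW (z1_gt0 j)) (fun j => ltW (z2_gt0 j))
  (mom1 k k_range) (mom2 k k_range)).
Qed.
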